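(* Let $p\ge 0$ be an integer. For all complex $y$ and all complex $x\ne 1$, $$\sum_{n=0}^{\infty}\binom{n}{p} R_n(y)\,x^n=\frac{x^p e^{y}}{(1-x)^{p+1}}\left\{1-e^{-(1-x)y}\sum_{j=0}^{p}\frac{(1-x)^j y^j}{j!}\right\},$$ and for $x=1$, $$\sum_{n=0}^{\infty}\binom{n}{p} R_n(y)=\frac{e^{y}y^{p+1}}{(p+1)!}.$$ (Convention: $0^0=1$.)
   Context: For an integer $n\ge 0$ and complex $y$, $R_n(y)=e^y-1-\frac{y}{1!}-\frac{y^2}{2!}-\dots-\frac{y^n}{n!}=e^y-\sum_{k=0}^n\frac{y^k}{k!}$. $\binom{n}{p}=0$ for $n<p$. *)

From Stdlib Require Import Reals Factorial.
From Coquelicot Require Import Coquelicot.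
Open Scope C_scope.

Definition cexp (z : C) : C :=
  (exp (Re z) * cos (Im z), exp (Re z) * sin (Im z))%R.

(* binomial coefficient on nat, with binom n p = 0 for n < p *)
Fixpoint binom (n p : nat) : nat :=
  match n, p with
  | _, O => 1%nat
  | O, S _ => 0%nat
  | S n', S p' => (binom n' p' + binom n' (S p'))%nat
  end.

Fixpoint csum (f : nat -> C) (n : nat) : C :=
  match n with
  | O => f O
  | S m => csum f m + f (S m)
  end.

Definition cfact (k : nat) : C := RtoC (INR (Factorial.fact k)).

(* R_n(y) = e^y - sum_{k=0}^n y^k / k!  (Cpow: c ^ 0 = 1, so 0^0 = 1) *)
Definition Rrem (n : nat) (y : C) : C :=
  cexp y - csum (fun k => Cpow y k / cfact k) n.

From Stdlib Require Import Reals Lia Lra.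
From Coquelicot Require Import Coquelicot.
Open Scope C_scope.

(* Write B_m = sum_(n<m) C(n,p) x^n.  Summation by parts turns the N-th partial sum into
   B_(N+1) R_N(y) + sum_(k<=N) y^k/k! B_k.  The boundary term vanishes in the limit, since
   |B_(N+1)| grows at most geometrically while |R_N(y)| = O(|y|^N/N!).  For x <> 1,
   (1-x)^(p+1) B_k = x^p - x^k sum_(j<=p) C(k,j) x^(p-j) (1-x)^j, and
   sum_k C(k,j) w^k/k! = w^j/j! e^w turns the main term into the closed form; for x = 1,
   B_k = C(k,p+1).  The bound on R_N(y) for complex y comes from the mean value theorem
   applied to the real and imaginary parts of s |-> e^(-sy) sum_(k<=N) (sy)^k/k!. *)

(** * Finite sums and binomial coefficients *)

Lemma csum_ext (f g : nat -> C) n :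
  (forall k, (k <= n)%nat -> f k = g k) -> csum f n = csum g n.
Proof.
  induction n as [|n IH]; intros H; simpl; [apply H; lia|].
  rewrite IH, H; auto; intros; apply H; lia.
Qed.

Lemma csum_plus (f g : nat -> C) n : csum (fun k => f k + g k) n = csum f n + csum g n.
Proof. induction n; simpl; auto. rewrite IHn; ring. Qed.

Lemma csum_minus (f g : nat -> C) n : csum (fun k => f k - g k) n = csum f n - csum g n.
Proof. induction n; simpl; auto. rewrite IHn; ring. Qed.

Lemma csum_mult_l (c : C) (f : nat -> C) n : c * csum f n = csum (fun k => c * f k) n.
Proof. induction n; simpl; auto. rewrite <- IHn; ring. Qed.

Lemma csum_swap (f : nat -> nat -> C) n m :
  csum (fun i => csum (fun j => f i j) m) n = csum (fun j => csum (fun i => f i j) n) m.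
Proof. induction n; simpl; auto. rewrite IHn, <- csum_plus. reflexivity. Qed.

Lemma csum_sum_n (f : nat -> C) n : csum f n = sum_n (G := C_AbelianMonoid) f n.
Proof.
  induction n; simpl; [now rewrite sum_O|].
  now rewrite sum_Sn, <- IHn.
Qed.

Lemma binom_0 n : binom n 0 = 1%nat.
Proof. now destruct n. Qed.

Lemma binom_small n p : (n < p)%nat -> binom n p = 0%nat.
Proof.
  revert p; induction n; intros p H; destruct p; try lia; simpl; auto.
  rewrite !IHn; lia.
Qed.

Lemma binom_diag n : binom n n = 1%nat.
Proof. induction n; simpl; auto. rewrite (binom_small n (S n)) by lia. lia. Qed.

Lemma binom_le_pow2 n p : (binom n p <= 2 ^ n)%nat.
Proof.
  revert p; induction n; intros p; destruct p; simpl; auto.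
  - specialize (IHn 0%nat). rewrite binom_0 in IHn. lia.
  - specialize (IHn p) as H1. specialize (IHn (S p)) as H2. lia.
Qed.

Lemma binom_INR n p : (p <= n)%nat -> INR (binom n p) = Binomial.C n p.
Proof.
  revert p; induction n; intros p H.
  - destruct p; [|lia]. now rewrite C_n_n.
  - destruct p as [|p].
    + rewrite binom_0, C_n_0. reflexivity.
    + simpl binom. rewrite plus_INR. destruct (Nat.eq_dec p n) as [->|Hp].
      * rewrite (binom_small n (S n)), binom_diag, !C_n_n by lia. simpl; ring.
      * rewrite !IHn by lia. apply pascal. lia.
Qed.

Lemma cfact_0 : cfact 0 = 1.
Proof. reflexivity. Qed.

Lemma cfact_S n : cfact (S n) = RtoC (INR (S n)) * cfact n.
Proof. unfold cfact. now rewrite fact_simpl, mult_INR, RtoC_mult. Qed.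

Lemma cfact_neq_0 n : cfact n <> 0.
Proof. intros H. apply RtoC_inj in H. revert H. apply INR_fact_neq_0. Qed.

Definition cbinom (n p : nat) : C := RtoC (INR (binom n p)).

Lemma cbinom_0 n : cbinom n 0 = 1.
Proof. unfold cbinom. now rewrite binom_0. Qed.

Lemma cbinom_S n p : cbinom (S n) (S p) = cbinom n p + cbinom n (S p).
Proof. unfold cbinom. simpl binom. now rewrite plus_INR, RtoC_plus. Qed.

Lemma cbinom_small n p : (n < p)%nat -> cbinom n p = 0.
Proof. intros H. unfold cbinom. now rewrite binom_small. Qed.

Lemma cbinom_diag n : cbinom n n = 1.
Proof. unfold cbinom. now rewrite binom_diag. Qed.

Lemma Cmod_cbinom_le n p : (Cmod (cbinom n p) <= 2 ^ n)%R.
Proof.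
  unfold cbinom. rewrite Cmod_R, Rabs_pos_eq by apply pos_INR.
  rewrite <- (pow_INR 2). apply le_INR, binom_le_pow2.
Qed.

Lemma cbinom_div_cfact k j : (j <= k)%nat ->
  cbinom k j / cfact k = / (cfact j * cfact (k - j)).
Proof.
  intros H. unfold cbinom, cfact. rewrite binom_INR by exact H. unfold Binomial.C.
  pose proof (INR_fact_neq_0 k). pose proof (INR_fact_neq_0 j). pose proof (INR_fact_neq_0 (k - j)).
  rewrite <- RtoC_mult, <- RtoC_div, <- RtoC_inv by auto using Rmult_integral_contrapositive.
  f_equal. field; auto.
Qed.

(** * The Taylor remainder of the complex exponential *)

Definition exp_taylor (N : nat) (z : C) : C := csum (fun k => Cpow z k / cfact k) N.

Lemma exp_taylor_at_0 N : exp_taylor N 0 = 1.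
Proof.
  unfold exp_taylor; induction N; cbn [csum]; [cbn [Cpow]; rewrite cfact_0; field|].
  rewrite IHN, Cpow_S. unfold Cdiv. ring.
Qed.

Lemma cexp_plus u v : cexp (u + v) = cexp u * cexp v.
Proof.
  destruct u as [a b], v as [c d]. unfold cexp, Cmult, Cplus, Re, Im; cbn [fst snd].
  rewrite exp_plus, cos_plus, sin_plus. f_equal; ring.
Qed.

Lemma cexp_0 : cexp 0 = 1.
Proof. unfold cexp, Re, Im, RtoC; cbn [fst snd]. rewrite exp_0, cos_0, sin_0. f_equal; ring. Qed.

Lemma exp_le_compat x y : (x <= y)%R -> (exp x <= exp y)%R.
Proof. intros [H | ->]; [left; now apply exp_increasing | apply Rle_refl]. Qed.

Lemma Cmod_cexp z : Cmod (cexp z) = exp (Re z).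
Proof.
  destruct z as [a b]. unfold Cmod, cexp, Re, Im; cbn [fst snd].
  replace ((exp a * cos b) ^ 2 + (exp a * sin b) ^ 2)%R with (exp a ^ 2)%R.
  - apply sqrt_pow2. left; apply exp_pos.
  - pose proof (sin2_cos2 b) as H. unfold Rsqr in H. nra.
Qed.

Lemma is_derive_Rmult (f g : R -> R) t df dg : is_derive f t df -> is_derive g t dg ->
  is_derive (fun s => f s * g s)%R t (df * g t + f t * dg)%R.
Proof. intros Hf Hg. apply @is_derive_mult; auto. intros; apply Rmult_comm. Qed.

Lemma is_derive_eq (f : R -> R) t l l' : is_derive f t l -> l = l' -> is_derive f t l'.
Proof. now intros H <-. Qed.

Definition is_cderive (f : R -> C) (t : R) (l : C) :=
  is_derive (fun s => Re (f s)) t (Re l) /\ is_derive (fun s => Im (f s)) t (Im l).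

Lemma is_cderive_ext f g t l :
  (forall s, f s = g s) -> is_cderive f t l -> is_cderive g t l.
Proof.
  intros E [Hre Him]; split; eapply is_derive_ext; eauto; intros s; simpl; now rewrite E.
Qed.

Lemma is_cderive_eq f t l l' : is_cderive f t l -> l = l' -> is_cderive f t l'.
Proof. now intros H <-. Qed.

Lemma is_cderive_plus f g t lf lg : is_cderive f t lf -> is_cderive g t lg ->
  is_cderive (fun s => f s + g s) t (lf + lg).
Proof. intros [Hf1 Hf2] [Hg1 Hg2]; split; now apply @is_derive_plus. Qed.

Lemma is_cderive_mult f g t lf lg : is_cderive f t lf -> is_cderive g t lg ->
  is_cderive (fun s => f s * g s) t (lf * g t + f t * lg).
Proof.
  intros [Hf1 Hf2] [Hg1 Hg2]; split; simpl; eapply is_derive_eq.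
  - apply @is_derive_minus; apply is_derive_Rmult; eauto.
  - unfold minus, plus, opp, Re, Im; simpl. ring.
  - apply @is_derive_plus; apply is_derive_Rmult; eauto.
  - unfold plus, Re, Im; simpl. ring.
Qed.

Lemma is_cderive_const c t : is_cderive (fun _ => c) t 0.
Proof. split; apply @is_derive_const. Qed.

Lemma is_cderive_scale z t : is_cderive (fun s => RtoC s * z) t z.
Proof.
  destruct z as [a b]; split; simpl.
  - apply (is_derive_ext (fun s => s * a)%R); [intros; now rewrite Rmult_0_l, Rminus_0_r|].
    auto_derive; auto; ring.
  - apply (is_derive_ext (fun s => s * b)%R); [intros; now rewrite Rmult_0_l, Rplus_0_r|].
    auto_derive; auto; ring.
Qed.

Lemma is_cderive_csum (F : nat -> R -> C) (D : nat -> C) t N :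
  (forall k, is_cderive (F k) t (D k)) ->
  is_cderive (fun s => csum (fun k => F k s) N) t (csum D N).
Proof. intros H; induction N; simpl; auto using is_cderive_plus. Qed.

Lemma is_cderive_cexp_scale w t :
  is_cderive (fun s => cexp (RtoC s * w)) t (w * cexp (RtoC t * w)).
Proof.
  destruct w as [a b]; split; unfold cexp, Cmult, RtoC, Re, Im; simpl.
  - apply (is_derive_ext (fun s => exp (s * a) * cos (s * b))%R).
    + intros s. now rewrite !Rmult_0_l, Rminus_0_r, Rplus_0_r.
    + auto_derive; [auto|]. rewrite !Rmult_0_l, Rminus_0_r, Rplus_0_r. ring.
  - apply (is_derive_ext (fun s => exp (s * a) * sin (s * b))%R).
    + intros s. now rewrite !Rmult_0_l, Rminus_0_r, Rplus_0_r.
    + auto_derive; [auto|]. rewrite !Rmult_0_l, Rminus_0_r, Rplus_0_r. ring.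
Qed.

Lemma is_cderive_pow_scale z k t :
  is_cderive (fun s => Cpow (RtoC s * z) k) t (RtoC (INR k) * z * Cpow (RtoC t * z) (pred k)).
Proof.
  induction k as [|k IH].
  - eapply is_cderive_eq; [apply (is_cderive_const 1)|]. change (INR 0) with 0%R. cbn [Cpow]. ring.
  - apply (is_cderive_ext (fun s => (RtoC s * z) * Cpow (RtoC s * z) k)); [now intros|].
    eapply is_cderive_eq; [apply is_cderive_mult; [apply is_cderive_scale | exact IH]|].
    rewrite S_INR, RtoC_plus. destruct k as [|k].
    + change (INR 0) with 0%R. cbn [pred Cpow]. ring.
    + cbn [pred]. rewrite (Cpow_S _ k). ring.
Qed.

Lemma exp_taylor_deriv_sum z w N :
  csum (fun k => RtoC (INR k) * z * Cpow w (pred k) / cfact k) N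
  = z * (exp_taylor N w - Cpow w N / cfact N).
Proof.
  unfold exp_taylor; induction N as [|N IH]; cbn [csum].
  - change (INR 0) with 0%R. unfold Cdiv. ring.
  - rewrite IH, cfact_S. cbn [pred]. rewrite (Cpow_S w N).
    assert (RtoC (INR (S N)) <> 0) by (intros H; apply RtoC_inj in H; revert H; apply not_0_INR; lia).
    pose proof (cfact_neq_0 N). field. auto.
Qed.

Lemma is_cderive_exp_taylor_scale z N t :
  is_cderive (fun s => exp_taylor N (RtoC s * z)) t
    (z * (exp_taylor N (RtoC t * z) - Cpow (RtoC t * z) N / cfact N)).
Proof.
  eapply is_cderive_eq; [apply (is_cderive_csum (fun k s => Cpow (RtoC s * z) k * / cfact k))|].
  - intros k. apply (is_cderive_mult (fun s => Cpow (RtoC s * z) k) (fun _ => / cfact k)).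
    + apply is_cderive_pow_scale.
    + apply is_cderive_const.
  - rewrite <- exp_taylor_deriv_sum. apply csum_ext. intros k _. unfold Cdiv. ring.
Qed.

Lemma is_cderive_cexp_mul_exp_taylor z N t :
  is_cderive (fun s => cexp (RtoC s * - z) * exp_taylor N (RtoC s * z)) t
    (- z * cexp (RtoC t * - z) * (Cpow (RtoC t * z) N / cfact N)).
Proof.
  eapply is_cderive_eq.
  - apply (is_cderive_mult (fun s => cexp (RtoC s * - z)) (fun s => exp_taylor N (RtoC s * z))).
    + apply is_cderive_cexp_scale.
    + apply is_cderive_exp_taylor_scale.
  - ring.
Qed.

Lemma Rabs_sub_le_of_derive_bound (f df : R -> R) a b K : (a <= b)%R ->
  (forall t, (a <= t <= b)%R -> is_derive f t (df t)) ->
  (forall t, (a <= t <= b)%R -> (Rabs (df t) <= K)%R) ->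
  (Rabs (f b - f a) <= K * (b - a))%R.
Proof.
  intros Hab Hd Hb.
  destruct (MVT_gen f a b df) as [c [Hc ->]];
    rewrite ?Rmin_left, ?Rmax_right in * by exact Hab.
  - intros t Ht. apply Hd. lra.
  - intros t Ht. apply continuity_pt_filterlim, (ex_derive_continuous (V := R_NormedModule)).
    exists (df t). now apply Hd.
  - rewrite Rabs_mult, (Rabs_pos_eq (b - a)) by lra.
    apply Rmult_le_compat_r; [lra | now apply Hb].
Qed.

(* The factor 2 absorbs the sqrt 2 lost by bounding the real and imaginary parts separately. *)
Lemma Cmod_sub_le_of_cderive_bound (f df : R -> C) a b K : (a <= b)%R ->
  (forall t, (a <= t <= b)%R -> is_cderive f t (df t)) ->
  (forall t, (a <= t <= b)%R -> (Cmod (df t) <= K)%R) ->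
  (Cmod (f b - f a) <= 2 * K * (b - a))%R.
Proof.
  intros Hab Hd Hb.
  assert (Hre : (Rabs (Re (f b) - Re (f a)) <= K * (b - a))%R).
  { apply (Rabs_sub_le_of_derive_bound (fun t => Re (f t)) (fun t => Re (df t))); auto.
    - intros t Ht. now apply Hd.
    - intros t Ht. eapply Rle_trans; [apply re_le_Cmod | now apply Hb]. }
  assert (Him : (Rabs (Im (f b) - Im (f a)) <= K * (b - a))%R).
  { apply (Rabs_sub_le_of_derive_bound (fun t => Im (f t)) (fun t => Im (df t))); auto.
    - intros t Ht. now apply Hd.
    - intros t Ht. eapply Rle_trans; [|now apply Hb].
      eapply Rle_trans; [apply Rmax_r | apply Rmax_Cmod]. }
  assert (Hsqrt2 : (sqrt 2 <= 2)%R).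
  { rewrite <- (sqrt_pow2 2) at 2 by lra. apply sqrt_le_1_alt. lra. }
  assert (HK : (0 <= K * (b - a))%R) by (eapply Rle_trans; [apply Rabs_pos | exact Hre]).
  eapply Rle_trans; [apply Cmod_2Rmax|].
  rewrite Rmult_assoc. apply Rmult_le_compat; [apply sqrt_pos | | exact Hsqrt2 |].
  - eapply Rle_trans; [apply Rabs_pos | apply Rmax_l].
  - apply Rmax_lub; [exact Hre | exact Him].
Qed.

Lemma Cmod_cfact n : Cmod (cfact n) = INR (Factorial.fact n).
Proof. unfold cfact. rewrite Cmod_R. apply Rabs_pos_eq, pos_INR. Qed.

Lemma Re_le_Cmod z : (Re z <= Cmod z)%R.
Proof. eapply Rle_trans; [apply Rle_abs | apply re_le_Cmod]. Qed.

Lemma Cmod_cexp_mul_exp_taylor_deriv_le z N t : (0 <= t <= 1)%R ->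
  (Cmod (- z * cexp (RtoC t * - z) * (Cpow (RtoC t * z) N / cfact N))
   <= exp (Cmod z) * Cmod z * (Cmod z ^ N / INR (Factorial.fact N)))%R.
Proof.
  intros Ht. assert (Hz := Cmod_ge_0 z).
  rewrite !Cmod_mult, Cmod_opp, Cmod_cexp, Cmod_div, Cmod_pow, Cmod_mult, Cmod_R, Cmod_cfact
    by apply cfact_neq_0.
  rewrite Rabs_pos_eq by lra.
  assert (Hre : (Re (RtoC t * - z) <= Cmod z)%R).
  { pose proof (Re_le_Cmod (- z)) as H. rewrite Cmod_opp in H.
    unfold Re, RtoC, Cmult, Copp in *; simpl in *. nra. }
  assert (Hpow : ((t * Cmod z) ^ N <= Cmod z ^ N)%R)
    by (apply pow_incr; split; [apply Rmult_le_pos|]; nra).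
  assert (Hinv : (0 < / INR (Factorial.fact N))%R) by apply Rinv_0_lt_compat, INR_fact_lt_0.
  unfold Rdiv. rewrite (Rmult_comm (Cmod z) (exp _)).
  apply Rmult_le_compat.
  - apply Rmult_le_pos; [left; apply exp_pos | exact Hz].
  - apply Rmult_le_pos; [apply pow_le; nra | lra].
  - apply Rmult_le_compat_r; [exact Hz | now apply exp_le_compat].
  - apply Rmult_le_compat_r; [lra | exact Hpow].
Qed.

(* With T_N = exp_taylor N, the map s |-> e^(-sz) T_N(sz) runs from 1 to e^(-z) T_N(z)
   and has the small derivative -z e^(-sz) (sz)^N/N!. *)
Lemma Cmod_cexp_sub_exp_taylor_le z N :
  (Cmod (cexp z - exp_taylor N z)
   <= 2 * exp (Cmod z) * exp (Cmod z) * Cmod z * (Cmod z ^ N / INR (Factorial.fact N)))%R.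
Proof.
  set (g := fun s => cexp (RtoC s * - z) * exp_taylor N (RtoC s * z)).
  set (K := (exp (Cmod z) * Cmod z * (Cmod z ^ N / INR (Factorial.fact N)))%R).
  assert (Hg : (Cmod (g 1%R - g 0%R) <= 2 * K * (1 - 0))%R).
  { apply (Cmod_sub_le_of_cderive_bound g
             (fun t => - z * cexp (RtoC t * - z) * (Cpow (RtoC t * z) N / cfact N))); [lra | |].
    - intros t _. apply is_cderive_cexp_mul_exp_taylor.
    - apply Cmod_cexp_mul_exp_taylor_deriv_le. }
  assert (Hinv : cexp z * cexp (- z) = 1).
  { rewrite <- cexp_plus, <- cexp_0. f_equal. ring. }
  assert (Hid : cexp z - exp_taylor N z = - cexp z * (g 1%R - g 0%R)).
  { unfold g. rewrite !Cmult_0_l, cexp_0, exp_taylor_at_0, Cmult_1_r.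
    replace (RtoC 1 * - z) with (- z) by ring. replace (RtoC 1 * z) with z by ring.
    transitivity (cexp z - cexp z * cexp (- z) * exp_taylor N z);
      [now rewrite Hinv, Cmult_1_l | ring]. }
  rewrite Hid, Cmod_mult, Cmod_opp, Cmod_cexp.
  replace (2 * exp (Cmod z) * exp (Cmod z) * Cmod z * (Cmod z ^ N / INR (Factorial.fact N)))%R
    with (exp (Cmod z) * (2 * K * (1 - 0)))%R by (unfold K; ring).
  apply Rmult_le_compat; [left; apply exp_pos | apply Cmod_ge_0 | | exact Hg].
  apply exp_le_compat, Re_le_Cmod.
Qed.

(** * Limits of complex sequences *)

Definition is_Clim_seq (u : nat -> C) (l : C) : Prop :=
  filterlim u eventually (locally (T := C_NormedModule) l).

Lemma is_Clim_seq_plus u v l m :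
  is_Clim_seq u l -> is_Clim_seq v m -> is_Clim_seq (fun n => u n + v n) (l + m).
Proof.
  intros Hu Hv. eapply filterlim_comp_2; [exact Hu | exact Hv |].
  exact (filterlim_plus (V := C_NormedModule) l m).
Qed.

Lemma is_Clim_seq_scal c u l : is_Clim_seq u l -> is_Clim_seq (fun n => c * u n) (c * l).
Proof.
  intros Hu. eapply filterlim_comp; [exact Hu |].
  exact (filterlim_scal_r (V := C_NormedModule) c l).
Qed.

Lemma is_Clim_seq_minus u v l m :
  is_Clim_seq u l -> is_Clim_seq v m -> is_Clim_seq (fun n => u n - v n) (l - m).
Proof.
  intros Hu Hv. apply is_Clim_seq_plus; [exact Hu|].
  apply (filterlim_ext (fun n => -1 * v n)); [intros; ring|].
  replace (- m) with (-1 * m) by ring. now apply is_Clim_seq_scal.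
Qed.

Lemma is_Clim_seq_csum (F : nat -> nat -> C) (L : nat -> C) m :
  (forall j, (j <= m)%nat -> is_Clim_seq (F j) (L j)) ->
  is_Clim_seq (fun n => csum (fun j => F j n) m) (csum L m).
Proof.
  induction m as [|m IH]; intros H; simpl; [apply H; lia|].
  apply is_Clim_seq_plus; [apply IH; intros; apply H | apply H]; lia.
Qed.

Lemma is_Clim_seq_shift u v l j :
  (forall n, u (n + j)%nat = v n) -> is_Clim_seq v l -> is_Clim_seq u l.
Proof.
  intros Huv Hv P HP. destruct (Hv P HP) as [N HN].
  exists (N + j)%nat. intros n Hn.
  replace n with (n - j + j)%nat by lia. rewrite Huv. apply HN. lia.
Qed.

Lemma is_Clim_seq_of_bound u l (e : nat -> R) :
  (forall n, (Cmod (u n - l) <= e n)%R) -> Un_cv e 0 -> is_Clim_seq u l.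
Proof.
  intros Hb He. apply filterlim_locally. intros eps.
  destruct (He eps (cond_pos eps)) as [N HN]. exists N. intros n Hn.
  apply (norm_compat1 (V := C_NormedModule)). eapply Rle_lt_trans; [apply Hb|].
  specialize (HN n Hn). unfold R_dist in HN. rewrite Rminus_0_r in HN.
  eapply Rle_lt_trans; [apply Rle_abs | exact HN].
Qed.

Lemma is_series_of_Clim_csum a l : is_Clim_seq (csum a) l -> is_series (V := C_NormedModule) a l.
Proof. apply filterlim_ext. intros n. apply csum_sum_n. Qed.

Lemma Un_cv_scal_pow_div_fact c x : Un_cv (fun n => c * (x ^ n / INR (Factorial.fact n)))%R 0.
Proof.
  rewrite <- (Rmult_0_r c). apply CV_mult; [|apply cv_speed_pow_fact].
  intros eps Heps. exists 0%nat. intros. unfold R_dist. rewrite Rminus_diag, Rabs_R0. exact Heps.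
Qed.

Lemma is_Clim_seq_exp_taylor z : is_Clim_seq (fun N => exp_taylor N z) (cexp z).
Proof.
  eapply is_Clim_seq_of_bound; [|apply Un_cv_scal_pow_div_fact].
  intros N. rewrite <- Cmod_opp.
  replace (- (exp_taylor N z - cexp z)) with (cexp z - exp_taylor N z) by ring.
  apply Cmod_cexp_sub_exp_taylor_le.
Qed.

(** * Summation by parts and the sums B_m *)

Fixpoint binom_powsum (x : C) (p m : nat) : C :=
  match m with
  | O => 0
  | S m' => binom_powsum x p m' + cbinom m' p * Cpow x m'
  end.

(* Uses R_n(y) = R_(n-1)(y) - y^n/n!. *)
Lemma csum_binom_rem_abel x y p N :
  csum (fun n => cbinom n p * Rrem n y * Cpow x n) N
  = binom_powsum x p (S N) * Rrem N y
    + csum (fun k => Cpow y k / cfact k * binom_powsum x p k) N.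
Proof.
  induction N as [|N IH]; cbn [csum binom_powsum].
  - unfold Cdiv. ring.
  - rewrite IH. unfold Rrem. cbn [csum binom_powsum]. unfold Cdiv. ring.
Qed.

Definition binom_tail_poly (x : C) (p m : nat) : C :=
  csum (fun j => cbinom m j * Cpow x (p - j) * Cpow (1 - x) j) p.

Lemma binom_tail_poly_S x p m :
  binom_tail_poly x (S p) m = x * binom_tail_poly x p m + cbinom m (S p) * Cpow (1 - x) (S p).
Proof.
  unfold binom_tail_poly. cbn [csum]. rewrite Nat.sub_diag, csum_mult_l. f_equal; [|simpl; ring].
  apply csum_ext. intros k Hk. replace (S p - k)%nat with (S (p - k)) by lia.
  rewrite Cpow_S. ring.
Qed.

Lemma binom_tail_poly_0 x p : binom_tail_poly x p 0 = Cpow x p.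
Proof.
  induction p as [|p IH].
  - unfold binom_tail_poly. cbn. rewrite cbinom_0. ring.
  - rewrite binom_tail_poly_S, IH, cbinom_small by lia. rewrite (Cpow_S x p). ring.
Qed.

Lemma binom_tail_poly_step x p m :
  binom_tail_poly x p m - x * binom_tail_poly x p (S m) = Cpow (1 - x) (S p) * cbinom m p.
Proof.
  revert m; induction p as [|p IH]; intros m.
  - unfold binom_tail_poly. cbn. rewrite !cbinom_0. ring.
  - rewrite !binom_tail_poly_S, (Cpow_S (1 - x) (S p)).
    transitivity (x * (binom_tail_poly x p m - x * binom_tail_poly x p (S m))
                  + (cbinom m (S p) - x * cbinom (S m) (S p)) * Cpow (1 - x) (S p)); [ring|].
    rewrite IH, cbinom_S. ring.
Qed.

Lemma binom_powsum_closed x p m :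
  Cpow (1 - x) (S p) * binom_powsum x p m = Cpow x p - Cpow x m * binom_tail_poly x p m.
Proof.
  induction m as [|m IH]; cbn [binom_powsum].
  - rewrite binom_tail_poly_0. simpl. ring.
  - rewrite Cmult_plus_distr_l, IH.
    replace (Cpow (1 - x) (S p) * (cbinom m p * Cpow x m))
      with (Cpow x m * (Cpow (1 - x) (S p) * cbinom m p)) by ring.
    rewrite <- binom_tail_poly_step, (Cpow_S x m). ring.
Qed.

Lemma binom_powsum_1 p m : binom_powsum 1 p m = cbinom m (S p).
Proof.
  induction m as [|m IH]; cbn [binom_powsum].
  - now rewrite cbinom_small by lia.
  - rewrite IH, Cpow_1_l, cbinom_S. ring.
Qed.

Definition binom_exp_sum (j : nat) (w : C) (N : nat) : C :=
  csum (fun k => cbinom k j / cfact k * Cpow w k) N.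

Lemma binom_exp_sum_small j w N : (N < j)%nat -> binom_exp_sum j w N = 0.
Proof.
  unfold binom_exp_sum. induction N as [|N IH]; intros H; cbn [csum];
    rewrite ?IH, cbinom_small by lia; unfold Cdiv; ring.
Qed.

Lemma binom_exp_sum_shift j w M :
  binom_exp_sum j w (M + j) = Cpow w j / cfact j * exp_taylor M w.
Proof.
  pose proof (cfact_neq_0 j) as Hj.
  induction M as [|M IH].
  - unfold exp_taylor. cbn [csum Cpow]. rewrite cfact_0. simpl (0 + j)%nat.
    destruct j as [|j]; unfold binom_exp_sum; cbn [csum]; rewrite cbinom_diag.
    + cbn [Cpow]. rewrite cfact_0. field.
    + fold (binom_exp_sum (S j) w j). rewrite binom_exp_sum_small by lia. field. exact Hj.
  - change (S M + j)%nat with (S (M + j)). unfold binom_exp_sum in *. cbn [csum].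
    rewrite IH, cbinom_div_cfact by lia.
    replace (S (M + j) - j)%nat with (S M) by lia. replace (S (M + j)) with (S M + j)%nat by lia.
    rewrite Cpow_add_r. unfold exp_taylor. cbn [csum].
    pose proof (cfact_neq_0 (S M)). field. auto.
Qed.

Lemma is_Clim_seq_binom_exp_sum j w :
  is_Clim_seq (binom_exp_sum j w) (Cpow w j / cfact j * cexp w).
Proof.
  apply (is_Clim_seq_shift _ (fun M => Cpow w j / cfact j * exp_taylor M w) _ j).
  - apply binom_exp_sum_shift.
  - apply is_Clim_seq_scal, is_Clim_seq_exp_taylor.
Qed.

Lemma binom_powsum_exp_identity x y p N :
  Cpow (1 - x) (S p) * csum (fun k => Cpow y k / cfact k * binom_powsum x p k) N
  = Cpow x p * exp_taylor N y
    - csum (fun j => Cpow x (p - j) * Cpow (1 - x) j * binom_exp_sum j (x * y) N) p.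
Proof.
  rewrite csum_mult_l.
  rewrite (csum_ext _ (fun k => Cpow x p * (Cpow y k / cfact k)
     - csum (fun j => Cpow x (p - j) * Cpow (1 - x) j * (cbinom k j / cfact k * Cpow (x * y) k)) p)).
  - rewrite csum_minus. unfold exp_taylor. rewrite <- csum_mult_l. f_equal.
    rewrite csum_swap. apply csum_ext. intros j _. unfold binom_exp_sum. now rewrite csum_mult_l.
  - intros k _.
    transitivity (Cpow y k / cfact k * (Cpow (1 - x) (S p) * binom_powsum x p k)); [ring|].
    rewrite binom_powsum_closed. unfold binom_tail_poly.
    transitivity (Cpow x p * (Cpow y k / cfact k) - Cpow y k / cfact k * Cpow x k *
      csum (fun j => cbinom k j * Cpow x (p - j) * Cpow (1 - x) j) p); [ring|].
    rewrite csum_mult_l. f_equal. apply csum_ext. intros j _.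
    rewrite Cpow_mult_l. unfold Cdiv. ring.
Qed.

Lemma Cmod_binom_powsum_le x p N :
  (Cmod (binom_powsum x p (S N)) <= 2 * (2 * (1 + Cmod x)) ^ N)%R.
Proof.
  set (q := (2 * (1 + Cmod x))%R).
  assert (Hx := Cmod_ge_0 x). assert (Hq : (2 <= q)%R) by (unfold q; lra).
  induction N as [|N IH].
  - cbn [binom_powsum Cpow pow]. rewrite Cplus_0_l, Cmult_1_r.
    pose proof (Cmod_cbinom_le 0 p). simpl in *. lra.
  - change (binom_powsum x p (S (S N)))
      with (binom_powsum x p (S N) + cbinom (S N) p * Cpow x (S N)).
    eapply Rle_trans; [apply Cmod_triangle|]. rewrite Cmod_mult, Cmod_pow.
    assert (Hterm : (Cmod (cbinom (S N) p) * Cmod x ^ S N <= q ^ S N)%R).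
    { unfold q. rewrite Rpow_mult_distr. apply Rmult_le_compat; auto using pow_le, Cmod_ge_0, Cmod_cbinom_le.
      apply pow_incr. lra. }
    assert (Hstep : (2 * q ^ N <= q ^ S N)%R).
    { simpl. apply Rmult_le_compat_r; [apply pow_le|]; lra. }
    lra.
Qed.

Lemma is_Clim_seq_abel_tail x p y :
  is_Clim_seq (fun N => binom_powsum x p (S N) * Rrem N y) 0.
Proof.
  set (q := (2 * (1 + Cmod x))%R).
  set (c := (2 * exp (Cmod y) * exp (Cmod y) * Cmod y)%R).
  apply (is_Clim_seq_of_bound _ _ (fun N => 2 * c * ((q * Cmod y) ^ N / INR (Factorial.fact N))))%R;
    [|apply Un_cv_scal_pow_div_fact].
  intros N.
  replace (binom_powsum x p (S N) * Rrem N y - 0) with (binom_powsum x p (S N) * Rrem N y)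
    by ring.
  rewrite Cmod_mult.
  assert (HB := Cmod_binom_powsum_le x p N).
  assert (HR := Cmod_cexp_sub_exp_taylor_le y N).
  unfold Rrem. fold (exp_taylor N y).
  eapply Rle_trans; [apply Rmult_le_compat; eauto using Cmod_ge_0|].
  right. fold q c. rewrite Rpow_mult_distr. unfold c, Rdiv. ring.
Qed.

Lemma csum_exp_scaled_closed x y p :
  csum (fun j => Cpow x (p - j) * Cpow (1 - x) j * (Cpow (x * y) j / cfact j * cexp (x * y))) p
  = Cpow x p * cexp y * cexp (- ((1 - x) * y))
    * csum (fun j => Cpow (1 - x) j * Cpow y j / cfact j) p.
Proof.
  rewrite csum_mult_l. apply csum_ext. intros j Hj.
  replace (cexp (x * y)) with (cexp y * cexp (- ((1 - x) * y))) by (rewrite <- cexp_plus; f_equal; ring).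
  replace (Cpow x p) with (Cpow x (p - j) * Cpow x j) by (rewrite <- Cpow_add_r; f_equal; lia).
  rewrite Cpow_mult_l. unfold Cdiv. ring.
Qed.

Lemma is_series_binom_rem_pow (p : nat) (y x : C) : x <> 1 ->
  is_series (V := C_NormedModule)
    (fun n => cbinom n p * Rrem n y * Cpow x n)
    (Cpow x p * cexp y / Cpow (1 - x) (S p) *
     (1 - cexp (- ((1 - x) * y)) * csum (fun j => Cpow (1 - x) j * Cpow y j / cfact j) p)).
Proof.
  intros Hx. apply is_series_of_Clim_csum.
  set (D := Cpow (1 - x) (S p)).
  assert (HD : D <> 0).
  { apply Cpow_nz, Cminus_eq_contra. intros E. apply Hx. now symmetry. }
  set (F := fun j N => Cpow x (p - j) * Cpow (1 - x) j * binom_exp_sum j (x * y) N).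
  apply (filterlim_ext (fun N => binom_powsum x p (S N) * Rrem N y
                                 + / D * (Cpow x p * exp_taylor N y - csum (fun j => F j N) p))).
  { intros N. rewrite csum_binom_rem_abel. unfold F. rewrite <- binom_powsum_exp_identity.
    fold D. field. exact HD. }
  replace (Cpow x p * cexp y / D * _)
    with (0 + / D * (Cpow x p * cexp y - csum (fun j => Cpow x (p - j) * Cpow (1 - x) j
            * (Cpow (x * y) j / cfact j * cexp (x * y))) p)).
  - apply is_Clim_seq_plus; [apply is_Clim_seq_abel_tail|].
    apply is_Clim_seq_scal, is_Clim_seq_minus.
    + apply is_Clim_seq_scal, is_Clim_seq_exp_taylor.
    + apply is_Clim_seq_csum. intros j _. apply is_Clim_seq_scal, is_Clim_seq_binom_exp_sum.
  - rewrite csum_exp_scaled_closed. field. exact HD.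
Qed.

Lemma is_series_binom_rem (p : nat) (y : C) :
  is_series (V := C_NormedModule) (fun n => cbinom n p * Rrem n y)
    (cexp y * Cpow y (S p) / cfact (S p)).
Proof.
  apply is_series_of_Clim_csum.
  apply (filterlim_ext (fun N => binom_powsum 1 p (S N) * Rrem N y + binom_exp_sum (S p) y N)).
  { intros N. transitivity (csum (fun n => cbinom n p * Rrem n y * Cpow 1 n) N).
    - rewrite csum_binom_rem_abel. f_equal. apply csum_ext. intros k _.
      rewrite binom_powsum_1. unfold Cdiv. ring.
    - apply csum_ext. intros k _. rewrite Cpow_1_l. ring. }
  replace (cexp y * Cpow y (S p) / cfact (S p)) with (0 + Cpow y (S p) / cfact (S p) * cexp y)
    by (unfold Cdiv; ring).
  apply is_Clim_seq_plus; [apply is_Clim_seq_abel_tail | apply is_Clim_seq_binom_exp_sum].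
Qed.

Theorem mainTheorem3 (p : nat) :
  (forall (y x : C), x <> 1 ->
     is_series (V := C_NormedModule)
       (fun n => RtoC (INR (binom n p)) * Rrem n y * Cpow x n)
       (Cpow x p * cexp y / Cpow (1 - x) (S p) *
        (1 - cexp (- ((1 - x) * y)) *
             csum (fun j => Cpow (1 - x) j * Cpow y j / cfact j) p)))
  /\
  (forall y : C,
     is_series (V := C_NormedModule)
       (fun n => RtoC (INR (binom n p)) * Rrem n y)
       (cexp y * Cpow y (S p) / cfact (S p))).
Proof.
  split.
  - intros y x. apply is_series_binom_rem_pow.
  - intros y. apply is_series_binom_rem.
Qed.
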